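(* Let $d \ge 2$ be an integer. For $\nu > 0$ and $\alpha \ge 0$ let $g_1(\nu, \alpha; d) = \left(\nu + 1 + (d-1) \alpha \nu \right) e^{-\frac{\nu^2 + (d-1) \alpha^2}{2}}$, and define $$h_1(\nu;d) = (\nu+1)^2 + 4 \nu^2 (d-1), \qquad h_2(\nu;d) = \frac{(\nu + 1) \sqrt{h_1(\nu;d)} - (\nu+1)^2}{4 \nu^2 (d-1)} - \frac{1}{2},$$ $$g_2(\nu; d) = \frac{\nu + 1 + \sqrt{h_1(\nu;d)}}{2}\, e^{-\frac{\nu^2}{2} + h_2(\nu;d)}.$$ Then $g_1(\nu, \alpha; d) \le g_2(\nu; d)$ for all $\nu > 0$ and $\alpha \ge 0$. *)

From Stdlib Require Import Reals.
Open Scope R_scope.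

Definition g1 (nu alpha : R) (d : nat) : R :=
  (nu + 1 + (INR d - 1) * alpha * nu) *
  exp (- (nu ^ 2 + (INR d - 1) * alpha ^ 2) / 2).

Definition h1 (nu : R) (d : nat) : R :=
  (nu + 1) ^ 2 + 4 * nu ^ 2 * (INR d - 1).

Definition h2 (nu : R) (d : nat) : R :=
  ((nu + 1) * sqrt (h1 nu d) - (nu + 1) ^ 2) / (4 * nu ^ 2 * (INR d - 1)) - 1 / 2.

Definition g2 (nu : R) (d : nat) : R :=
  (nu + 1 + sqrt (h1 nu d)) / 2 * exp (- nu ^ 2 / 2 + h2 nu d).

(** With [c = d - 1], [alpha |-> g1 nu alpha d] is an affine function
    [p + q alpha] times the Gaussian [exp (-(k + c alpha^2)/2)].  At a
    critical point [a] the affine factor is [(p + q a) (1 + c a (alpha - a))],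
    which the tangent bound [1 + t <= exp t] dominates by
    [(p + q a) exp (c a (alpha - a))]; completing the square leaves
    [g1 nu a d * exp (- c (alpha - a)^2 / 2)].  The critical point is the
    positive root of [c nu a^2 + (nu + 1) a = nu], whose discriminant is
    [h1 nu d], and [g2 nu d] is the value of [g1] there. *)

From Stdlib Require Import Reals Lra.
Open Scope R_scope.

Lemma exp_le_compat (x y : R) : x <= y -> exp x <= exp y.
Proof.
  intros [Hlt | ->]; [left; apply exp_increasing; exact Hlt | right; reflexivity].
Qed.

Lemma affine_mul_gauss_le_crit (k p q c a x : R) :
  0 <= c -> 0 <= p + q * a -> q = c * a * (p + q * a) ->
  (p + q * x) * exp (- (k + c * x ^ 2) / 2)
    <= (p + q * a) * exp (- (k + c * a ^ 2) / 2).
Proof.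
  intros Hc HM Hcrit.
  set (M := p + q * a) in *.
  assert (Haffine : p + q * x = M * (1 + c * a * (x - a))).
  { transitivity (M + q * (x - a)); [unfold M; ring | rewrite Hcrit; ring]. }
  assert (Htangent : p + q * x <= M * exp (c * a * (x - a))).
  { rewrite Haffine. apply Rmult_le_compat_l; [exact HM | apply exp_ineq1_le]. }
  assert (Hsquare : c * a * (x - a) + - (k + c * x ^ 2) / 2
                    = - (k + c * a ^ 2) / 2 - c * (x - a) ^ 2 / 2) by field.
  apply Rle_trans with (M * exp (c * a * (x - a)) * exp (- (k + c * x ^ 2) / 2)).
  - apply Rmult_le_compat_r; [left; apply exp_pos | exact Htangent].
  - rewrite Rmult_assoc, <- exp_plus, Hsquare.
    apply Rmult_le_compat_l; [exact HM |].
    apply exp_le_compat.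
    assert (0 <= c * (x - a) ^ 2) by (apply Rmult_le_pos; [exact Hc | apply pow2_ge_0]).
    lra.
Qed.

Definition quadratic_pos_root (A B C : R) : R :=
  (sqrt (B ^ 2 + 4 * A * C) - B) / (2 * A).

Section QuadraticRoot.

Variables A B C : R.
Hypotheses (HA : 0 < A) (HC : 0 < C).

Let disc_nonneg : 0 <= B ^ 2 + 4 * A * C.
Proof. nra. Qed.

Lemma quadratic_pos_root_eq :
  A * quadratic_pos_root A B C ^ 2 + B * quadratic_pos_root A B C = C.
Proof.
  unfold quadratic_pos_root.
  assert (Hs : sqrt (B ^ 2 + 4 * A * C) ^ 2 = B ^ 2 + 4 * A * C)
    by (rewrite <- Rsqr_pow2; apply Rsqr_sqrt, disc_nonneg).
  field_simplify; [| lra].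
  rewrite Hs. field. lra.
Qed.

Lemma quadratic_pos_root_pos : 0 < quadratic_pos_root A B C.
Proof.
  unfold quadratic_pos_root.
  assert (Hs : B < sqrt (B ^ 2 + 4 * A * C)).
  { apply Rle_lt_trans with (Rabs B); [apply Rle_abs |].
    rewrite <- sqrt_Rsqr_abs, Rsqr_pow2.
    apply sqrt_lt_1; [apply pow2_ge_0 | exact disc_nonneg | nra]. }
  apply Rdiv_lt_0_compat; lra.
Qed.

End QuadraticRoot.

Section CriticalPoint.

Variables (nu : R) (d : nat).
Hypotheses (hnu : 0 < nu) (hd : (2 <= d)%nat).

Let c := INR d - 1.

Let c_ge1 : 1 <= c.
Proof. unfold c. assert (2 <= INR d) by (apply (le_INR 2); exact hd). lra. Qed.

Definition alpha_star : R := quadratic_pos_root (c * nu) (nu + 1) nu.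

Let h1_disc : h1 nu d = (nu + 1) ^ 2 + 4 * (c * nu) * nu.
Proof. unfold h1; fold c; ring. Qed.

Lemma alpha_star_pos : 0 < alpha_star.
Proof. apply quadratic_pos_root_pos; nra. Qed.

Lemma alpha_star_crit : c * nu * alpha_star ^ 2 + (nu + 1) * alpha_star = nu.
Proof. apply quadratic_pos_root_eq; nra. Qed.

Lemma g2_eq_g1_alpha_star : g2 nu d = g1 nu alpha_star d.
Proof.
  pose proof alpha_star_crit as Hcrit.
  assert (Hroot : sqrt (h1 nu d) = 2 * (c * nu) * alpha_star + (nu + 1)).
  { unfold alpha_star, quadratic_pos_root. rewrite h1_disc. field. nra. }
  unfold g2, g1, h2; fold c. rewrite Hroot.
  f_equal; [field | f_equal].
  replace (((nu + 1) * (2 * (c * nu) * alpha_star + (nu + 1)) - (nu + 1) ^ 2)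
           / (4 * nu ^ 2 * c)) with ((nu + 1) * alpha_star / (2 * nu)) by (field; lra).
  replace ((nu + 1) * alpha_star) with (nu - c * nu * alpha_star ^ 2) by lra.
  field; lra.
Qed.

End CriticalPoint.

Theorem lemma3 (d : nat) (hd : (2 <= d)%nat) (nu alpha : R)
  (hnu : 0 < nu) (halpha : 0 <= alpha) :
  g1 nu alpha d <= g2 nu d.
Proof.
  rewrite (g2_eq_g1_alpha_star nu d hnu hd).
  pose proof (alpha_star_pos nu d hnu hd) as Hpos.
  pose proof (alpha_star_crit nu d hnu hd) as Hcrit.
  assert (Hc : 0 <= INR d - 1) by (pose proof (le_INR 2 d hd); simpl in *; lra).
  unfold g1.
  set (c := INR d - 1) in *; set (a := alpha_star nu d) in *.
  replace (nu + 1 + c * alpha * nu) with (nu + 1 + c * nu * alpha) by ring.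
  replace (nu + 1 + c * a * nu) with (nu + 1 + c * nu * a) by ring.
  apply affine_mul_gauss_le_crit.
  - exact Hc.
  - assert (0 <= c * nu * a) by (apply Rmult_le_pos; [apply Rmult_le_pos |]; lra).
    lra.
  - transitivity (c * (c * nu * a ^ 2 + (nu + 1) * a)); [rewrite Hcrit; ring | ring].
Qed.
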